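(* Let $d\ge 2$ be an integer, let $C:=-2.15$ and let $g:\mathbb{R}\to\mathbb{R}$ be $$g(z):=\exp\big(z^3+(-2-3C)z^2+(3C^2+4C)z+\ln 2\big)-1 .$$ For $W=[w_1,\ldots,w_d]$ with $w_1,\ldots,w_d\in\mathbb{R}^d$, define $f(\cdot;W):\mathbb{R}^d\to\mathbb{R}^d$ by $f(x;W):=[g(\langle w_1,x\rangle),\ldots,g(\langle w_d,x\rangle)]^\top$. Then there exists such a $W$ for which $f(\cdot;W)$ has two distinct fixed points $p_1,p_2\in\mathbb{R}^d$ such that for each $i\in\{1,2\}$ there exist constants $\epsilon_i>0$, $c_i>0$ and $K_i\in[0,1)$ with the following property: for every initial point $x^{(0)}\in[p_{i,1}-\epsilon_i,p_{i,1}+\epsilon_i]\times\{1\}^{d-1}$, the fixed-point iteration $x^{(t)}=f(x^{(t-1)};W)$ ($t\ge1$) converges to $p_i$, and for every $t\ge2$, $$\|x^{(t)}-p_i\|_\infty\le K_i^t\cdot c_i\epsilon_i .$$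
   Context: $p_{i,1}$ denotes the first coordinate of $p_i$; $\|\cdot\|_\infty$ is the $\ell_\infty$ norm. A fixed point of $F$ is a point $p$ with $F(p)=p$. *)

From HB Require Import structures.
From mathcomp Require Import all_boot all_order all_algebra.
From mathcomp Require Import all_classical all_reals all_analysis.
From mathcomp Require Import Rstruct Rstruct_topology.
Set Implicit Arguments. Unset Strict Implicit. Unset Printing Implicit Defensive.
Import Order.TTheory GRing.Theory Num.Theory.
Local Open Scope classical_set_scope.
Local Open Scope ring_scope.

Definition RR : realType := Rdefinitions.R.

Definition Cst : RR := - (215%:R / 100%:R).

Definition g (z : RR) : RR :=
  expR (z ^+ 3 + (-2 - 3 * Cst) * z ^+ 2 + (3 * Cst ^+ 2 + 4 * Cst) * z + ln 2) - 1.

(* vectors of R^d are functions 'I_d -> R; W i is the row w_{i+1} *)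
Definition inner (d : nat) (w x : 'I_d -> RR) : RR := \sum_(j < d) w j * x j.

Definition fW (d : nat) (W : 'I_d -> 'I_d -> RR) (x : 'I_d -> RR) : 'I_d -> RR :=
  fun i => g (inner (W i) x).

Definition normInf (d : nat) (v : 'I_d -> RR) : RR := \big[Num.max/0]_(i < d) `|v i|.

Definition vsub (d : nat) (x y : 'I_d -> RR) : 'I_d -> RR := fun i => x i - y i.

Definition locally_linearly_attracting (d : nat) (W : 'I_d -> 'I_d -> RR)
    (p : 'I_d -> RR) : Prop :=
  exists (eps c K : RR), 0 < eps /\ 0 < c /\ 0 <= K /\ K < 1 /\
    forall x0 : 'I_d -> RR,
      (forall i : 'I_d, (val i = 0%N -> p i - eps <= x0 i <= p i + eps) /\
                        (val i <> 0%N -> x0 i = 1)) ->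
      ((fun t : nat => normInf (vsub (iter t (fW W) x0) p)) @ \oo --> (0 : RR)) /\
      (forall t : nat, (2 <= t)%N ->
          normInf (vsub (iter t (fW W) x0) p) <= K ^+ t * c * eps).

From HB Require Import structures.
From mathcomp Require Import all_boot all_order all_algebra.
From mathcomp Require Import all_classical all_reals all_analysis.
From mathcomp Require Import Rstruct Rstruct_topology.
From mathcomp Require Import lra ring.
Set Implicit Arguments. Unset Strict Implicit. Unset Printing Implicit Defensive.
Import Order.TTheory GRing.Theory Num.Theory.
Local Open Scope ring_scope.

(* The exponent of g is a cubic whose two critical points are C and C + 4/3,
   so g is flat to second order at both.  Take the first row of W to be
   (a, b, 0, ..., 0) and all other rows 0: since g 0 = 1, the coordinates
   2..d stay equal to 1, the second one acts as a bias, and on the line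
   {1}^(d-1) the map f reduces to z |-> g (a z + b).  Choosing the affine map
   z |-> a z + b to send g(C) to C and g(C + 4/3) to C + 4/3 makes g(C) and
   g(C + 4/3) fixed points of this one-dimensional map with vanishing
   derivative; near a superattracting fixed point the map is a contraction
   of ratio 1/2, which gives geometric convergence. *)

Section Superattraction.
Context {R : realFieldType}.

Lemma quadratic_halving (phi : R -> R) (p delta K : R) :
  0 < delta -> 0 <= K ->
  (forall z, `|z - p| <= delta -> `|phi z - p| <= K * `|z - p| ^+ 2) ->
  exists2 eps, 0 < eps & forall z, `|z - p| <= eps -> `|phi z - p| <= `|z - p| / 2.
Proof.
move=> delta_gt0 K_ge0 phi_quad.
have K1_gt0 : 0 < 2 * (K + 1) by lra.
exists (Num.min delta (2 * (K + 1))^-1) => [|z].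
  by rewrite lt_min delta_gt0 invr_gt0.
rewrite le_min => /andP[z_delta z_small].
apply: le_trans (phi_quad z z_delta) _.
have Kz : K * `|z - p| <= 2^-1.
  have : `|z - p| * (2 * (K + 1)) <= 1 by rewrite -ler_pdivlMr // div1r.
  have := normr_ge0 (z - p); nra.
have := normr_ge0 (z - p); rewrite expr2; nra.
Qed.

Lemma iter_halving (phi : R -> R) (p eps : R) :
  (forall z, `|z - p| <= eps -> `|phi z - p| <= `|z - p| / 2) ->
  forall z, `|z - p| <= eps ->
  forall t, `|iter t phi z - p| <= 2^-1 ^+ t * `|z - p|.
Proof.
move=> phi_half z z_eps; elim=> [|t IH]; first by rewrite expr0 mul1r.
have shrink : 2^-1 ^+ t * `|z - p| <= `|z - p|.
  by rewrite ler_piMl // exprn_ile1 //; lra.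
rewrite iterS; apply: le_trans (phi_half _ (le_trans IH (le_trans shrink z_eps))) _.
rewrite exprS; lra.
Qed.

End Superattraction.

Lemma norm_expR_sub1_le {R : realType} (y : R) :
  `|y| <= 1 -> `|expR y - 1| <= expR 1 * `|y|.
Proof.
move=> y_le1.
have e_ge1 : 1 <= expR (1 : R) by have := exp.expR_ge1Dx (1 : R); lra.
have lower := exp.expR_ge1Dx y.
have upper : expR y - 1 <= y * expR y.
  have := ler_wpM2r (ltW (exp.expR_gt0 y)) (exp.expR_ge1Dx (- y)).
  rewrite exp.expRN mulVf ?gt_eqF ?exp.expR_gt0 //; lra.
have ey_le : expR y <= expR 1 by rewrite exp.ler_expR; move: y_le1; rewrite ler_norml; lra.
have := exp.expR_gt0 y.
case: (lerP 0 y) => y0.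
  by rewrite (ger0_norm y0) ger0_norm; nra.
by rewrite (ltr0_norm y0) ler0_norm; nra.
Qed.

Lemma norm_cubic_le {R : realFieldType} (t c : R) :
  `|t| <= 1 -> `|c| <= 2 -> `|t ^+ 2 * (t + c)| <= 3 * t ^+ 2.
Proof.
move=> t_le1 c_le2.
rewrite normrM (ger0_norm (sqr_ge0 t)) mulrC ler_wpM2r ?sqr_ge0 //.
by apply: le_trans (ler_normD _ _) _; lra.
Qed.

Definition gpoly (u : RR) : RR :=
  u ^+ 3 + (-2 - 3 * Cst) * u ^+ 2 + (3 * Cst ^+ 2 + 4 * Cst) * u + ln 2.

Lemma gE (u : RR) : g u = expR (gpoly u) - 1. Proof. by []. Qed.

Lemma g0 : g 0 = 1.
Proof. by rewrite gE /gpoly !expr0n /= !mulr0 !add0r exp.lnK ?posrE; lra. Qed.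

Definition crit1 : RR := Cst.
Definition crit2 : RR := Cst + 4 / 3.

Lemma gpoly_crit1 (t : RR) : gpoly (crit1 + t) - gpoly crit1 = t ^+ 2 * (t + - 2).
Proof. by rewrite /gpoly /crit1; ring. Qed.

Lemma gpoly_crit2 (t : RR) : gpoly (crit2 + t) - gpoly crit2 = t ^+ 2 * (t + 2).
Proof. by rewrite /gpoly /crit2; field. Qed.

Lemma g_quadratic_at (u c : RR) :
  `|c| <= 2 -> (forall t, gpoly (u + t) - gpoly u = t ^+ 2 * (t + c)) ->
  forall t, `|t| <= 2^-1 ->
  `|g (u + t) - g u| <= 3 * expR 1 * expR (gpoly u) * t ^+ 2.
Proof.
move=> c_le2 gpoly_u t t_small.
have y_le : `|t ^+ 2 * (t + c)| <= 3 * t ^+ 2 by apply: norm_cubic_le => //; lra.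
have t2_le : t ^+ 2 <= 4^-1.
  rewrite -real_normK ?num_real //; have := normr_ge0 t; nra.
have diffE : g (u + t) - g u = expR (gpoly u) * (expR (t ^+ 2 * (t + c)) - 1).
  have gpolyE : gpoly (u + t) = gpoly u + t ^+ 2 * (t + c) by rewrite -gpoly_u; ring.
  by rewrite !gE gpolyE exp.expRD; ring.
have e_y : `|expR (t ^+ 2 * (t + c)) - 1| <= expR 1 * (3 * t ^+ 2).
  have y_le1 : `|t ^+ 2 * (t + c)| <= 1 by lra.
  apply: le_trans (norm_expR_sub1_le y_le1) _.
  by rewrite ler_pM2l ?exp.expR_gt0.
rewrite diffE normrM gtr0_norm ?exp.expR_gt0 //.
have -> : 3 * expR 1 * expR (gpoly u) * t ^+ 2 = expR (gpoly u) * (expR 1 * (3 * t ^+ 2)).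
  by ring.
by rewrite ler_pM2l ?exp.expR_gt0.
Qed.

Definition z1 : RR := g crit1.
Definition z2 : RR := g crit2.

Lemma z1_neq_z2 : z1 != z2.
Proof.
apply/negP => /eqP /(congr1 (+%R^~ 1)); rewrite /z1 /z2 !gE !subrK => /exp.expR_inj E.
have := gpoly_crit1 (4 / 3).
change (gpoly crit2 - gpoly crit1 = (4 / 3) ^+ 2 * (4 / 3 + - 2) -> False).
by rewrite E subrr expr2; lra.
Qed.

Definition slope : RR := (crit1 - crit2) / (z1 - z2).
Definition bias : RR := crit1 - slope * z1.
Definition gaff (z : RR) : RR := g (slope * z + bias).

Lemma aff_z1 : slope * z1 + bias = crit1.
Proof. by rewrite /bias; ring. Qed.

Lemma aff_z2 : slope * z2 + bias = crit2.
Proof.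
have := z1_neq_z2; rewrite -subr_eq0 => z12.
by rewrite /bias /slope; field.
Qed.

Lemma gaff_halving_at (u c : RR) :
  slope * g u + bias = u -> `|c| <= 2 ->
  (forall t, gpoly (u + t) - gpoly u = t ^+ 2 * (t + c)) ->
  exists2 eps, 0 < eps &
    forall z, `|z - g u| <= eps -> `|gaff z - g u| <= `|z - g u| / 2.
Proof.
move=> aff_u c_le2 gpoly_u.
have slope1 : 0 < 2 * (`|slope| + 1) by have := normr_ge0 slope; lra.
apply: (@quadratic_halving _ _ _ (2 * (`|slope| + 1))^-1
          (3 * expR 1 * expR (gpoly u) * slope ^+ 2)).
- by rewrite invr_gt0.
- by rewrite mulr_ge0 ?sqr_ge0 // !mulr_ge0 ?exp.expR_ge0.
move=> z z_near; set t := slope * (z - g u).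
have gaffE : gaff z = g (u + t) by rewrite /gaff /t -{1}aff_u; congr g; ring.
have t_small : `|t| <= 2^-1.
  rewrite /t normrM.
  have : `|slope| * `|z - g u| * (2 * (`|slope| + 1)) <= `|slope|.
    by rewrite -mulrA ler_piMr // -ler_pdivlMr // div1r.
  have := normr_ge0 (z - g u); have := normr_ge0 slope; nra.
rewrite gaffE; apply: le_trans (g_quadratic_at c_le2 gpoly_u t_small) _.
by rewrite /t exprMn -[(z - g u) ^+ 2]real_normK ?num_real // !mulrA.
Qed.

Lemma normInf_ge0 n (v : 'I_n -> RR) : 0 <= normInf v.
Proof. by rewrite /normInf; elim/big_ind: _ => // x y x0 _; rewrite le_max x0. Qed.

Lemma normInf_le n (v : 'I_n -> RR) (B : RR) :
  0 <= B -> (forall i, `|v i| <= B) -> normInf v <= B.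
Proof. by move=> B0 vB; rewrite /normInf; elim/big_ind: _ => // x y; rewrite ge_max => ->. Qed.

Section OneDimensionalReduction.
Variable n : nat.
Local Notation d := n.+2.

Definition Wbias : 'I_d -> 'I_d -> RR := fun i j =>
  if val i == 0%N then (if val j == 0%N then slope else if val j == 1%N then bias else 0)
  else 0.

Definition embed (z : RR) : 'I_d -> RR := fun j => if val j == 0%N then z else 1.

Lemma embed_ord0 (x : 'I_d -> RR) :
  (forall i : 'I_d, val i <> 0%N -> x i = 1) -> x = embed (x ord0).
Proof.
move=> x1; apply: funext => -[[|k] k_lt] //=; first by congr x; apply: val_inj.
exact: x1.
Qed.

Lemma embed_inj : injective embed.
Proof. by move=> z w /(congr1 (fun x => x ord0)). Qed.

Lemma fW_embed (z : RR) : fW Wbias (embed z) = embed (gaff z).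
Proof.
apply: funext => -[[|k] k_lt]; rewrite /fW /inner /=.
  rewrite 2!big_ord_recl big1 => [|j _]; last by rewrite /Wbias /= mul0r.
  by rewrite /Wbias /embed /= mulr1 addr0.
by rewrite big1 ?g0 // => j _; rewrite /Wbias /= mul0r.
Qed.

Lemma iter_fW_embed (z : RR) t : iter t (fW Wbias) (embed z) = embed (iter t gaff z).
Proof. by elim: t => [|t IH] //; rewrite !iterS IH fW_embed. Qed.

Lemma normInf_embed_le (z w : RR) : normInf (vsub (embed z) (embed w)) <= `|z - w|.
Proof.
apply: normInf_le => // i; rewrite /vsub /embed.
by case: eqP => _; rewrite ?subrr ?normr0.
Qed.

Lemma embed_attracting (p : RR) :
  (exists2 eps, 0 < eps & forall z, `|z - p| <= eps -> `|gaff z - p| <= `|z - p| / 2) ->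
  locally_linearly_attracting Wbias (embed p).
Proof.
move=> [eps eps_gt0 gaff_half].
exists eps, 1, 2^-1; split=> //; do 3!(split; first lra).
move=> x0 x0_near.
have x0E : x0 = embed (x0 ord0) by apply: embed_ord0 => i /(proj2 (x0_near i)).
have x0_eps : `|x0 ord0 - p| <= eps by rewrite ler_distl; exact: (proj1 (x0_near ord0)).
have bound t : normInf (vsub (iter t (fW Wbias) x0) (embed p)) <= 2^-1 ^+ t * eps.
  rewrite x0E iter_fW_embed; apply: le_trans (normInf_embed_le _ _) _.
  apply: le_trans (iter_halving gaff_half x0_eps t) _.
  by rewrite ler_wpM2l ?exprn_ge0 //; lra.
split=> [|t _]; last by rewrite mulr1.
apply: (@squeeze_cvgr _ _ _ _ (fun _ => 0) (geometric eps 2^-1)).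
- by apply: nearW => t; rewrite normInf_ge0 /= /geometric mulrC bound.
- exact: cvg_cst.
- by apply: cvg_geometric; rewrite ger0_norm; lra.
Qed.

End OneDimensionalReduction.

Theorem lemmaC7 (d : nat) (hd : (2 <= d)%N) :
  exists (W : 'I_d -> 'I_d -> RR) (p1 p2 : 'I_d -> RR),
    p1 <> p2 /\ fW W p1 = p1 /\ fW W p2 = p2 /\
    locally_linearly_attracting W p1 /\ locally_linearly_attracting W p2.
Proof.
case: d hd => [|[|n]] // _.
have gaff_z1 : gaff z1 = z1 by rewrite /gaff aff_z1.
have gaff_z2 : gaff z2 = z2 by rewrite /gaff aff_z2.
exists (@Wbias n), (@embed n z1), (@embed n z2).
split; first by move=> /embed_inj /eqP; apply/negP; exact: z1_neq_z2.
split; first by rewrite fW_embed gaff_z1.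
split; first by rewrite fW_embed gaff_z2.
split; apply: embed_attracting.
- by apply: (gaff_halving_at aff_z1 _ gpoly_crit1); rewrite normrN ger0_norm.
- by apply: (gaff_halving_at aff_z2 _ gpoly_crit2); rewrite ger0_norm.
Qed.
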